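(* Let $G$ be a group and $A$ a minimax-antifinitary $\mathbb{Z}G$-module. If $H$ is a proper subgroup of $G$ which is not contained in $\mathbf{Coc}_{\mathbb{Z}\text{-mmx}}(G)$, then $H$ is finitely generated.
   Context: An $R$-module is minimax if it has a finite series of submodules whose factors are each noetherian or artinian. For a subgroup $H$ of $G$, $C_A(H)$ is the set of elements of $A$ fixed by all of $H$. $\mathbf{Coc}_{\mathbb{Z}\text{-mmx}}(G) = \{x \in G \mid A/C_A(x) \text{ is a minimax } \mathbb{Z}\text{-module}\}$. A $\mathbb{Z}G$-module $A$ is minimax-antifinitary if $A/C_A(H)$ is a minimax $\mathbb{Z}$-module for every proper subgroup $H$ of $G$ that is not finitely generated, while $A/C_A(G)$ is not a minimax $\mathbb{Z}$-module. *)

From HB Require Import structures.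
From Stdlib Require List.
From mathcomp Require Import all_boot all_algebra.
Set Implicit Arguments. Unset Strict Implicit. Unset Printing Implicit Defensive.
Import GRing.Theory.
Local Open Scope ring_scope.

Record group := Group {
  gcar :> Type;
  gmul : gcar -> gcar -> gcar;
  gone : gcar;
  ginv : gcar -> gcar;
  gmulA : forall x y z, gmul x (gmul y z) = gmul (gmul x y) z;
  gmul1x : forall x, gmul gone x = x;
  gmulx1 : forall x, gmul x gone = x;
  gmulVx : forall x, gmul (ginv x) x = gone;
  gmulxV : forall x, gmul x (ginv x) = gone
}.

Definition is_subgroup (G : group) (H : G -> Prop) : Prop :=
  H (gone G) /\ (forall x y, H x -> H y -> H (gmul x y)) /\
  (forall x, H x -> H (ginv x)).

Definition proper_subgroup (G : group) (H : G -> Prop) : Prop :=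
  is_subgroup H /\ exists g : G, ~ H g.

Definition gen_by (G : group) (s : list G) (x : G) : Prop :=
  forall K : G -> Prop, is_subgroup K -> (forall y, List.In y s -> K y) -> K x.

Definition fin_generated (G : group) (H : G -> Prop) : Prop :=
  exists s : list G, forall x, H x <-> gen_by s x.

Definition ZG_action (G : group) (A : zmodType) (act : A -> G -> A) : Prop :=
  (forall a b g, act (a + b) g = act a g + act b g) /\
  (forall a, act a (gone G) = a) /\
  (forall a g h, act a (gmul g h) = act (act a g) h).

Definition centA (G : group) (A : zmodType) (act : A -> G -> A)
  (H : G -> Prop) (a : A) : Prop :=
  forall h, H h -> act a h = a.

Definition is_addsub (A : zmodType) (B : A -> Prop) : Prop :=
  B 0 /\ (forall a b, B a -> B b -> B (a - b)).

(* The factor Y/X (X <= Y subgroups) is noetherian, resp. artinian, Z-module: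
   by the correspondence theorem, subgroups of Y/X are subgroups K of A with
   X <= K <= Y. *)
Definition between (A : zmodType) (X Y K : A -> Prop) : Prop :=
  is_addsub K /\ (forall a, X a -> K a) /\ (forall a, K a -> Y a).

Definition noetherian_factor (A : zmodType) (X Y : A -> Prop) : Prop :=
  forall K : nat -> A -> Prop,
    (forall n, between X Y (K n)) ->
    (forall n a, K n a -> K n.+1 a) ->
    exists m, forall n a, (m <= n)%N -> (K n a <-> K m a).

Definition artinian_factor (A : zmodType) (X Y : A -> Prop) : Prop :=
  forall K : nat -> A -> Prop,
    (forall n, between X Y (K n)) ->
    (forall n a, K n.+1 a -> K n a) ->
    exists m, forall n a, (m <= n)%N -> (K n a <-> K m a).

(* A/B is a minimax Z-module (B a subgroup of A): there is a finite series
   B = B_0 <= B_1 <= ... <= B_n = A of subgroups (i.e. a series of submodules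
   of A/B) with each factor B_(i+1)/B_i noetherian or artinian. *)
Definition minimax_quot (A : zmodType) (B : A -> Prop) : Prop :=
  exists (n : nat) (S : nat -> A -> Prop),
    (forall a, S 0%N a <-> B a) /\
    (forall a, S n a) /\
    (forall i, (i <= n)%N -> is_addsub (S i)) /\
    (forall i a, (i < n)%N -> S i a -> S i.+1 a) /\
    (forall i, (i < n)%N ->
       noetherian_factor (S i) (S i.+1) \/ artinian_factor (S i) (S i.+1)).

Definition Coc_mmx (G : group) (A : zmodType) (act : A -> G -> A) (x : G) : Prop :=
  minimax_quot (centA act (fun g => g = x)).

Definition minimax_antifinitary (G : group) (A : zmodType) (act : A -> G -> A)
  : Prop :=
  (forall H : G -> Prop, proper_subgroup H -> ~ fin_generated H ->
     minimax_quot (centA act H)) /\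
  ~ minimax_quot (centA act (fun _ : G => True)).

(* For x in H we have C_A(H) <= C_A(x), so A/C_A(x) is a quotient of A/C_A(H).
   Being minimax passes to quotients: if B_0 <= ... <= B_n is a series of A/B
   with noetherian or artinian factors and B <= B', then the B_i + B' form such
   a series of A/B', since (Y + B')/(X + B') is a quotient of Y/X.  Hence, if
   H were not finitely generated, antifinitarity would make A/C_A(H) minimax
   and every element of H would lie in Coc_{Z-mmx}(G). *)
From mathcomp Require Import all_boot all_algebra.
From Stdlib Require Import Classical.
Set Implicit Arguments. Unset Strict Implicit.
Import GRing.Theory.
Local Open Scope ring_scope.

Section AdditiveSubgroups.
Variable A : zmodType.
Implicit Types X Y B K : A -> Prop.

Lemma addsub0 B : is_addsub B -> B 0.
Proof. by case. Qed.

Lemma addsubB B a b : is_addsub B -> B a -> B b -> B (a - b).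
Proof. by move=> [_ subB]; apply: subB. Qed.

Lemma addsubD B a b : is_addsub B -> B a -> B b -> B (a + b).
Proof.
move=> hB Ba Bb; rewrite -[b]opprK; apply: addsubB => //.
by rewrite -sub0r; apply: addsubB => //; apply: addsub0.
Qed.

Definition sum_sub X Y (a : A) : Prop := exists x y, [/\ X x, Y y & a = x + y].

Lemma sum_subl X Y a : is_addsub Y -> X a -> sum_sub X Y a.
Proof. by move=> hY Xa; exists a, 0; rewrite addr0; split=> //; apply: addsub0. Qed.

Lemma sum_subr X Y a : is_addsub X -> Y a -> sum_sub X Y a.
Proof. by move=> hX Ya; exists 0, a; rewrite add0r; split=> //; apply: addsub0. Qed.

Lemma sum_sub_addsub X Y : is_addsub X -> is_addsub Y -> is_addsub (sum_sub X Y).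
Proof.
move=> hX hY; split; first exact: sum_subl (addsub0 hX).
move=> _ _ [x [y [Xx Yy ->]]] [x' [y' [Xx' Yy' ->]]].
exists (x - x'), (y - y'); split; try exact: addsubB.
by rewrite opprD addrACA.
Qed.

Section SumFactor.
Variables X Y B : A -> Prop.
Hypotheses (hX : is_addsub X) (hY : is_addsub Y) (hB : is_addsub B).
Hypothesis subXY : forall a, X a -> Y a.

(* Intersecting with Y is the correspondence between the subgroups of
   (Y + B)/(X + B) and a family of subgroups of Y/X. *)
Lemma between_sum_restrict K :
  between (sum_sub X B) (sum_sub Y B) K -> between X Y (fun a => K a /\ Y a).
Proof.
move=> [hK [XBK _]]; split; last split.
- split; first by split; apply: addsub0.
  by move=> a b [Ka Ya] [Kb Yb]; split; apply: addsubB.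
- by move=> a Xa; split; [apply: XBK; apply: sum_subl | apply: subXY].
- by move=> a [].
Qed.

Lemma between_sum_restrict_sub K K' :
  between (sum_sub X B) (sum_sub Y B) K ->
  between (sum_sub X B) (sum_sub Y B) K' ->
  (forall y, K y /\ Y y -> K' y /\ Y y) -> forall a, K a -> K' a.
Proof.
move=> [hK [XBK KYB]] [hK' [XBK' _]] KK' a Ka.
have [y [b [Yy Bb Ea]]] := KYB a Ka.
have XBb : sum_sub X B b by apply: sum_subr.
have Ky : K y by have := addsubB hK Ka (XBK _ XBb); rewrite Ea addrK.
by rewrite Ea; apply: addsubD => //; [case: (KK' y) | apply: XBK'].
Qed.

Lemma between_sum_restrict_eq K K' :
  between (sum_sub X B) (sum_sub Y B) K ->
  between (sum_sub X B) (sum_sub Y B) K' ->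
  (forall y, K y /\ Y y <-> K' y /\ Y y) -> forall a, K a <-> K' a.
Proof.
move=> bK bK' KK' a; split; apply: between_sum_restrict_sub => // y;
  by case: (KK' y).
Qed.

Lemma noetherian_factor_sum :
  noetherian_factor X Y -> noetherian_factor (sum_sub X B) (sum_sub Y B).
Proof.
move=> noethXY K bK incK.
have [m stab] := noethXY (fun n a => K n a /\ Y a)
  (fun n => between_sum_restrict (bK n)) (fun n a '(conj Ka Ya) => conj (incK n a Ka) Ya).
by exists m => n a le_mn; apply: between_sum_restrict_eq => // y; apply: stab.
Qed.

Lemma artinian_factor_sum :
  artinian_factor X Y -> artinian_factor (sum_sub X B) (sum_sub Y B).
Proof.
move=> artXY K bK decK.
have [m stab] := artXY (fun n a => K n a /\ Y a)
  (fun n => between_sum_restrict (bK n)) (fun n a '(conj Ka Ya) => conj (decK n a Ka) Ya).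
by exists m => n a le_mn; apply: between_sum_restrict_eq => // y; apply: stab.
Qed.

End SumFactor.

Lemma minimax_quotS B B' :
  is_addsub B' -> (forall a, B a -> B' a) -> minimax_quot B -> minimax_quot B'.
Proof.
move=> hB' subBB' [n [S [S0 [Sn [hS [incS factS]]]]]].
exists n, (fun i => sum_sub (S i) B'); split; last split; last split; last split.
- move=> a; split; last exact: sum_subr (hS 0%N isT).
  by move=> [s [b [/S0 Bs B'b ->]]]; apply: addsubD => //; apply: subBB'.
- by move=> a; apply: sum_subl.
- by move=> i le_in; apply: sum_sub_addsub => //; apply: hS.
- by move=> i a lt_in [s [b [Ss B'b ->]]]; exists s, b; split=> //; apply: incS.
- move=> i lt_in; have hSi := hS i (ltnW lt_in); have hSi1 := hS i.+1 lt_in.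
  have incSi := incS i ^~ lt_in.
  case: (factS i lt_in) => [noeth | art]; [left | right].
  + exact: noetherian_factor_sum hSi hSi1 hB' incSi noeth.
  + exact: artinian_factor_sum hSi hSi1 hB' incSi art.
Qed.

End AdditiveSubgroups.

Section Centralizers.
Variables (G : group) (A : zmodType) (act : A -> G -> A).
Hypothesis actD : forall a b g, act (a + b) g = act a g + act b g.

Lemma act0 g : act 0 g = 0.
Proof. by apply: (addrI (act 0 g)); rewrite -actD !addr0. Qed.

Lemma actB a b g : act (a - b) g = act a g - act b g.
Proof.
by apply/eqP; rewrite eq_sym subr_eq -actD subrK.
Qed.

Lemma centA_addsub (H : G -> Prop) : is_addsub (centA act H).
Proof.
split; first by move=> h _; apply: act0.
by move=> a b Ca Cb h Hh; rewrite actB Ca // Cb.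
Qed.

Lemma centA_sub (H K : G -> Prop) :
  (forall g, H g -> K g) -> forall a, centA act K a -> centA act H a.
Proof. by move=> HK a Ca h /HK; apply: Ca. Qed.

End Centralizers.

Theorem lemma2p8 (G : group) (A : zmodType) (act : A -> G -> A)
  (Hact : ZG_action act) (Hanti : minimax_antifinitary act)
  (H : G -> Prop) (HH : proper_subgroup H)
  (Hnot : ~ (forall x : G, H x -> Coc_mmx act x)) :
  fin_generated H.
Proof.
apply: NNPP => not_fg; apply: Hnot => x Hx.
have [actD _] := Hact.
have mmxH := proj1 Hanti H HH not_fg.
apply: minimax_quotS mmxH; first exact: (centA_addsub actD).
by apply: centA_sub => _ ->.
Qed.
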